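(* Assume $\alpha\le\beta+1$ and set $\lambda=\lfloor(\beta+1)/\alpha\rfloor$. Let $\mathcal{S}_0\subseteq\mathcal{S}$ be nonempty with maximum $\overline{s}$ and minimum $\underline{s}$, let $l=\lfloor(\beta+\underline{s}-\overline{s})/\alpha\rfloor$, and let $n\ge l$. Then there exists a set $\mathcal{V}^n(\mathcal{S}_0)\subseteq\mathbb{Z}^n$ of request sequences such that $$\log_2\big|\mathcal{V}^n(\mathcal{S}_0)\big|\le \left\lceil \frac{n-l}{\lambda}\right\rceil,$$ and such that for every input pair $(s_0,\mathbf{x})\in\mathcal{S}_0\times\mathcal{X}^n$ we have $\mathcal{Y}^n(s_0,\mathbf{x})\cap\mathcal{V}^n(\mathcal{S}_0)\neq\emptyset$ (feasible sets taken with output alphabet $\mathbb{Z}$).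
   Context: Fix integers $\alpha\ge 1$ (maximal consumption per step) and $\beta\ge 0$ (battery capacity). Let $\mathcal{X}=\{0,1,\dots,\alpha\}$ and $\mathcal{S}=\{0,1,\dots,\beta\}$. For an initial battery state $s_0\in\mathcal{S}$, a consumption sequence $\mathbf{x}=(x_0,\dots,x_{n-1})\in\mathcal{X}^n$ and a request sequence $\mathbf{y}=(y_0,\dots,y_{n-1})\in\mathbb{Z}^n$, the battery states are $s_i=s_0+\sum_{k=0}^{i-1}y_k-\sum_{k=0}^{i-1}x_k$ for $i=0,1,\dots,n$. For an output alphabet $\mathcal{Y}\subseteq\mathbb{Z}$, the set of feasible requests is $\mathcal{Y}^n(s_0,\mathbf{x})=\{\mathbf{y}\in\mathcal{Y}^n: s_i\in\{0,\dots,\beta\}\text{ for all } i=0,\dots,n\}$. *)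

From HB Require Import structures.
From mathcomp Require Import all_boot all_order all_algebra.
Set Implicit Arguments. Unset Strict Implicit. Unset Printing Implicit Defensive.
Import Order.TTheory GRing.Theory Num.Theory.

Definition ceil_div (a b : nat) : nat := (a + b.-1) %/ b.

Definition battery_state (s0 : nat) (x : seq nat) (y : seq int) (i : nat) : int :=
  (s0%:Z + \sum_(k < i) y`_k - \sum_(k < i) (nth 0%N x k)%:Z)%R.

(* y belongs to Y^n(s0, x) with output alphabet Z: all states s_0..s_n lie in {0..beta} *)
Definition feasible (beta n s0 : nat) (x : n.-tuple nat) (y : n.-tuple int) : Prop :=
  forall i, (i <= n)%N -> (0 <= battery_state s0 x y i <= beta%:Z)%R.

From HB Require Import structures.
From mathcomp Require Import all_boot all_order all_algebra.
From mathcomp Require Import zify ring.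
Set Implicit Arguments. Unset Strict Implicit. Unset Printing Implicit Defensive.
Import GRing.Theory Num.Theory.
Local Notation "n %:Z" := (Posz n) (only parsing).

(* Let y_0 = beta - smax and y_k = 0 for
   0 < k < l: this first lifts every initial state of S0 to at least
   beta + smin - smax and at most beta, a margin that absorbs l steps of
   consumption.  The remaining n - l steps are cut into blocks of length
   lam = floor((beta+1)/alpha); on each block the request is constantly
   alpha or constantly 0.  If the level t at the start of a block is below
   the total consumption D of the block we request alpha (the level then stays
   in [t, t + lam*alpha - D] within [0, beta]), otherwise 0 (the level stays in
   [t - D, t]).  Hence one bit per block suffices: the codebook V consists of
   the schedules indexed by ceil((n-l)/lam) bits, and for every (s0, x) the
   greedily chosen bits give a feasible request sequence. *)

Definition level (s0 : nat) (X : nat -> nat) (Y : nat -> int) (i : nat) : int :=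
  (s0%:Z + \sum_(k < i) Y k - \sum_(k < i) (X k)%:Z)%R.

Definition consumed (X : nat -> nat) (i : nat) : nat := \sum_(k < i) X k.

Lemma battery_stateE (s0 : nat) (x : seq nat) (y : seq int) (i : nat) :
  battery_state s0 x y i = level s0 (nth 0%N x) (nth 0%R y) i.
Proof. by []. Qed.

Lemma level0 (s0 : nat) (X : nat -> nat) (Y : nat -> int) :
  level s0 X Y 0 = s0%:Z.
Proof. by rewrite /level !big_ord0 subr0 addr0. Qed.

Lemma levelS (s0 : nat) (X : nat -> nat) (Y : nat -> int) (i : nat) :
  level s0 X Y i.+1 = (level s0 X Y i + Y i - (X i)%:Z)%R.
Proof. by rewrite /level !big_ord_recr /=; ring. Qed.

Lemma consumed0 (X : nat -> nat) : consumed X 0 = 0.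
Proof. by rewrite /consumed big_ord0. Qed.

Lemma consumedS (X : nat -> nat) (i : nat) : consumed X i.+1 = consumed X i + X i.
Proof. by rewrite /consumed big_ord_recr. Qed.

Lemma level_prefix (s0 : nat) (X : nat -> nat) (Y Y' : nat -> int) (i : nat) :
  (forall k, k < i -> Y k = Y' k) -> level s0 X Y i = level s0 X Y' i.
Proof.
move=> eqY; rewrite /level; congr (_ + _ - _)%R.
by apply: eq_bigr => k _; apply: eqY.
Qed.

Lemma consumed_window (X : nat -> nat) (alpha i j : nat) :
  (forall k, X k <= alpha) -> i <= j ->
  consumed X i <= consumed X j <= consumed X i + (j - i) * alpha.
Proof.
move=> boundX; elim: j => [|j IH] le_ij.
  by move: le_ij; rewrite leqn0 => /eqP ->; lia.
case: (ltnP i j.+1) => [lt_ij | ge_ij]; last first.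
  have -> : i = j.+1 by lia.
  lia.
have := IH (ltnSE lt_ij); have := boundX j.
rewrite consumedS; have -> : j.+1 - i = (j - i).+1 by lia.
rewrite mulSn; lia.
Qed.

Lemma level_block (s0 : nat) (X : nat -> nat) (Y : nat -> int) (a d c : nat) :
  (forall k, a <= k < a + d -> Y k = c%:Z) ->
  level s0 X Y (a + d) =
    (level s0 X Y a + (c * d)%:Z - (consumed X (a + d))%:Z + (consumed X a)%:Z)%R.
Proof.
elim: d => [|d IH] constY; first by rewrite addn0 muln0; ring.
have stepY : Y (a + d) = c%:Z by apply: constY; lia.
rewrite addnS levelS consumedS IH => [|k ?]; last by apply: constY; lia.
rewrite stepY mulnS; lia.
Qed.

(* One block: from a level t in [0, beta], a block of lam steps whose
   consumption D d after d steps grows by at most alpha per step is served by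
   the constant request alpha when t < D lam, and by the constant request 0
   otherwise, provided lam * alpha <= beta + 1. *)
Lemma block_choice (alpha beta lam : nat) (t : int) (D : nat -> nat) :
  lam * alpha <= beta.+1 -> (0 <= t <= beta%:Z)%R -> D 0 = 0 ->
  (forall d e, d <= e -> D d <= D e <= D d + (e - d) * alpha) ->
  exists c : bool, forall d, d <= lam ->
    (0 <= t + ((if c then alpha else 0) * d)%:Z - (D d)%:Z <= beta%:Z)%R.
Proof.
move=> lam_alpha t_ok D0 D_window.
exists (t < (D lam)%:Z)%R => d le_d_lam.
have /andP[D_mono D_lam] := D_window d lam le_d_lam.
have /andP[_ D_d] := D_window 0 d (leq0n d); rewrite D0 subn0 in D_d.
have split_lam : (lam - d) * alpha + d * alpha = lam * alpha.
  by rewrite -mulnDl subnK.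
case: ifP => t_small; lia.
Qed.

Definition schedule (alpha y0 l lam : nat) (f : nat -> bool) (k : nat) : nat :=
  if k < l then (if k == 0 then y0 else 0)
  else if f ((k - l) %/ lam) then alpha else 0.

Lemma schedule_block (alpha y0 l lam q k : nat) (f : nat -> bool) :
  0 < lam -> l + q * lam <= k < l + q.+1 * lam ->
  schedule alpha y0 l lam f k = if f q then alpha else 0.
Proof.
move=> lam_gt0 k_in; rewrite /schedule ifF; last by lia.
suff -> : (k - l) %/ lam = q by [].
apply/eqP; rewrite eqn_leq leq_divRL // -ltnS ltn_divLR //; lia.
Qed.

Lemma schedule_agree (alpha y0 l lam q k : nat) (f g : nat -> bool) :
  0 < lam -> (forall i, i < q -> f i = g i) -> k < l + q * lam ->
  schedule alpha y0 l lam f k = schedule alpha y0 l lam g k.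
Proof.
move=> lam_gt0 eq_fg k_lt; rewrite /schedule; case: ifP => // k_ge.
by rewrite eq_fg // ltn_divLR //; lia.
Qed.

Lemma ceil_div_cover (a b : nat) : 0 < b -> a <= ceil_div a b * b.
Proof.
by move=> b_gt0; have := ltn_ceil (a + b.-1) b_gt0; rewrite /ceil_div; lia.
Qed.

Section GreedySchedule.

Variables (alpha beta smin smax s0 : nat) (X : nat -> nat).
Hypotheses (alpha_gt0 : 0 < alpha) (alpha_le : alpha <= beta.+1).
Hypotheses (smax_le : smax <= beta) (s0_range : smin <= s0 <= smax).
Hypothesis X_le : forall k, X k <= alpha.

Let lam := beta.+1 %/ alpha.
Let l := (beta + smin - smax) %/ alpha.

Definition requests (f : nat -> bool) (k : nat) : int :=
  (schedule alpha (beta - smax) l lam f k)%:Z.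

Definition safe_upto (f : nat -> bool) (m : nat) : Prop :=
  forall j, j <= m -> (0 <= level s0 X (requests f) j <= beta%:Z)%R.

Lemma lam_gt0 : 0 < lam.
Proof. by rewrite divn_gt0. Qed.

(* The initial request beta - smax leaves a margin for l steps of consumption. *)
Lemma initial_safe (f : nat -> bool) : safe_upto f l.
Proof.
have l_margin : l * alpha <= beta + smin - smax by apply: leq_divM.
move=> [|j] le_jl; first by rewrite level0; lia.
have quiet : forall k, 1 <= k < 1 + j -> requests f k = 0%:Z.
  by move=> k k_in; rewrite /requests /schedule ifT ?ifF //; lia.
rewrite -add1n (level_block s0 X quiet) levelS level0.
rewrite add1n (consumedS X 0) consumed0.
rewrite /requests /schedule ifT; last by lia.
have /andP[_ consumed_j] := consumed_window X_le (leq0n j.+1).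
have : j.+1 * alpha <= l * alpha by rewrite leq_mul2r le_jl orbT.
rewrite consumed0 in consumed_j.
lia.
Qed.

Lemma extend_safe (f : nat -> bool) (q : nat) :
  safe_upto f (l + q * lam) ->
  exists c : bool,
    safe_upto (fun i => if i == q then c else f i) (l + q.+1 * lam).
Proof.
move=> safe_f; set a := l + q * lam.
pose D d := consumed X (a + d) - consumed X a.
have consumed_from_a d : consumed X a <= consumed X (a + d).
  by have /andP[] := consumed_window X_le (leq_addr d a).
have D_window d e : d <= e -> D d <= D e <= D d + (e - d) * alpha.
  move=> le_de; have := consumed_window X_le (_ : a + d <= a + e).
  rewrite leq_add2l subnDl => /(_ le_de) /andP[].
  have := consumed_from_a d; rewrite /D; lia.
have lam_alpha : lam * alpha <= beta.+1 by apply: leq_divM.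
have D0 : D 0 = 0 by rewrite /D addn0 subnn.
have [c block_ok] := block_choice lam_alpha (safe_f a (leqnn a)) D0 D_window.
exists c => j le_j.
set g := fun i => if i == q then c else f i.
have g_before k : k < a -> requests g k = requests f k.
  move=> k_lt; congr Posz; apply: schedule_agree lam_gt0 _ k_lt => i i_lt.
  by rewrite /g ltn_eqF.
case: (leqP j a) => [le_ja | lt_aj].
  have -> : level s0 X (requests g) j = level s0 X (requests f) j.
    by apply: level_prefix => k k_lt; apply: g_before; lia.
  exact: safe_f.
have g_block k :
    a <= k < a + (j - a) -> requests g k = (if c then alpha else 0)%:Z.
  move=> k_in; rewrite /requests (@schedule_block _ _ _ _ q k g lam_gt0) /g.
    by rewrite eqxx.
  by rewrite mulSn in le_j; lia.
rewrite -(subnKC (ltnW lt_aj)) (level_block s0 X g_block).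
rewrite (level_prefix s0 X g_before).
have := block_ok (j - a); have := consumed_from_a (j - a); rewrite /D.
rewrite mulSn in le_j; move: (_ * (j - a)) => served; lia.
Qed.

Lemma good_schedule (q : nat) : exists f : nat -> bool, safe_upto f (l + q * lam).
Proof.
elim: q => [|q [f safe_f]].
  by exists (fun=> false); rewrite mul0n addn0; apply: initial_safe.
have [c safe_g] := extend_safe safe_f.
by exists (fun i => if i == q then c else f i).
Qed.

End GreedySchedule.

Definition codeword (n alpha y0 l lam : nat) (f : nat -> bool) : n.-tuple int :=
  @Tuple n _ (mkseq (fun k => (schedule alpha y0 l lam f k)%:Z) n)
    (introT eqP (size_mkseq _ _)).

Definition codebook (n m alpha y0 l lam : nat) : seq (n.-tuple int) :=
  undup [seq codeword n alpha y0 l lam (nth false b)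
          | b : m.-tuple bool <- enum {: m.-tuple bool}].

Lemma codebook_size (n m alpha y0 l lam : nat) :
  size (codebook n m alpha y0 l lam) <= 2 ^ m.
Proof.
apply: leq_trans (size_undup _) _.
by rewrite size_map -cardE card_tuple card_bool.
Qed.

Lemma codebook_spec (n m alpha y0 l lam : nat) (f : nat -> bool) :
  0 < lam -> n <= l + m * lam ->
  exists2 y, y \in codebook n m alpha y0 l lam &
    forall k, k < n -> nth 0%R y k = (schedule alpha y0 l lam f k)%:Z.
Proof.
move=> lam_gt0 cover.
pose bits : m.-tuple bool := @Tuple m _ (mkseq f m) (introT eqP (size_mkseq _ _)).
exists (codeword n alpha y0 l lam (nth false bits)).
  by rewrite mem_undup; apply: map_f; rewrite mem_enum.
move=> k k_lt; rewrite nth_mkseq //; congr Posz.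
apply: (@schedule_agree _ _ _ _ m) lam_gt0 _ _ => [i i_lt|]; last by lia.
by rewrite nth_mkseq.
Qed.

Theorem theorem1 (alpha beta : nat) (S0 : seq nat) (smin smax n : nat) :
  (0 < alpha)%N -> (alpha <= beta.+1)%N ->
  S0 != [::] -> (forall s, s \in S0 -> (s <= beta)%N) ->
  smin \in S0 -> smax \in S0 -> (forall s, s \in S0 -> (smin <= s <= smax)%N) ->
  let lam := (beta.+1 %/ alpha)%N in
  let l := ((beta + smin - smax) %/ alpha)%N in
  (l <= n)%N ->
  exists V : seq (n.-tuple int),
    uniq V /\ (size V <= 2 ^ ceil_div (n - l) lam)%N /\
    (forall (s0 : nat) (x : n.-tuple nat),
        s0 \in S0 -> all (fun a => a <= alpha)%N x ->
        exists2 y, y \in V & feasible beta s0 x y).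
Proof.
move=> alpha_gt0 alpha_le _ S0_le _ smax_in S0_range lam l _.
have lam_pos : 0 < lam := lam_gt0 alpha_gt0 alpha_le.
set m := ceil_div (n - l) lam.
have cover : n <= l + m * lam by have := ceil_div_cover (n - l) lam_pos; lia.
exists (codebook n m alpha (beta - smax) l lam).
split; first exact: undup_uniq.
split; first exact: codebook_size.
move=> s0 x s0_in x_le.
have X_le k : nth 0 x k <= alpha.
  by case: (ltnP k (size x)) => [/(all_nthP 0 x_le)|/(nth_default 0) ->].
have [f safe_f] :=
  good_schedule alpha_gt0 alpha_le (S0_le _ smax_in) (S0_range _ s0_in) X_le m.
have [y y_in y_nth] :=
  @codebook_spec n m alpha (beta - smax) l lam f lam_pos cover.
exists y => // i le_in.
rewrite battery_stateE.
have -> : level s0 (nth 0 x) (nth 0%R y) i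
          = level s0 (nth 0 x) (requests alpha beta smin smax f) i.
  by apply: level_prefix => k k_lt; rewrite y_nth //; lia.
by apply: safe_f; lia.
Qed.
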